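(* Let $w:=3/\sqrt{2}$ and define, for $q\in(0,1)$ and $t\in[0,w]$, $$\theta_5(q,t):=\sum_{j=0}^{5}q^{j(j+1)/2}(-t+wi)^j,\qquad \theta_*(q,t):=\sum_{j=6}^{\infty}q^{j(j+1)/2}(-t+wi)^j.$$ Then for all $(q,t)\in[0.3,0.6]\times[0,w]$ one has $|\theta_*(q,t)|\leq 0.018$ and $\mathrm{Im}(\theta_5(q,t))>0.13$. Consequently, for $(q,t)\in[0.3,0.6]\times[0,w]$, $\theta(q,-t+wi)\neq 0$, where $\theta(q,x):=\sum_{j=0}^{\infty}q^{j(j+1)/2}x^j$. *)

From Stdlib Require Import Reals.
From Coquelicot Require Import Coquelicot.
Open Scope R_scope.

Definition w : R := 3 / sqrt 2.

Definition xpt (t : R) : C := (- t, w)%R.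

Definition theta_term (q : R) (x : C) (j : nat) : C :=
  Cmult (RtoC (q ^ (j * (j + 1) / 2))) (Cpow x j).

Definition theta5 (q t : R) : C :=
  Cplus (theta_term q (xpt t) 0)
 (Cplus (theta_term q (xpt t) 1)
 (Cplus (theta_term q (xpt t) 2)
 (Cplus (theta_term q (xpt t) 3)
 (Cplus (theta_term q (xpt t) 4)
        (theta_term q (xpt t) 5))))).

Definition theta_star_term (q t : R) (j : nat) : C :=
  if (j <? 6)%nat then RtoC 0 else theta_term q (xpt t) j.

From Stdlib Require Import Reals Lra Lia QArith Qround Qreals RMicromega List.
From Coquelicot Require Import Coquelicot.
Import ListNotations.
Open Scope R_scope.

(* Since w^2 = 9/2, Im theta_5(q,t) = w P(q,t) for a polynomial P with rational
   coefficients.  Write P(q,t) = P(q,17/8) + (17/8 - t) D(q,t), where 17/8 > w and D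
   is minus the divided difference of P in t at 17/8.  Then it suffices that
   P(q,17/8) >= 0.0615 and D >= 0 on the box, and both are certified by branch and
   bound over the rationals, bounding each monomial in nonnegative variables by its
   value at a corner of the box.  The tail theta_* is dominated by a geometric
   series, because |x| <= 3 and j(j+1)/2 >= 21 + 7k for j = 6 + k.  Finally
   Im theta = Im theta_5 + Im theta_* >= 0.13 - 0.018 > 0. *)

Lemma pow_le_pow_of_le_1 x m n : 0 <= x <= 1 -> (m <= n)%nat -> x ^ n <= x ^ m.
Proof.
  intros Hx Hmn; replace n with (m + (n - m))%nat by lia; rewrite pow_add.
  assert (0 <= x ^ m) by (apply pow_le; lra).
  assert (x ^ (n - m) <= 1) by (rewrite <- (pow1 (n - m)); apply pow_incr; lra).
  assert (0 <= x ^ (n - m)) by (apply pow_le; lra).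
  nra.
Qed.

Lemma Im_ge_opp_Cmod (c : C) : - Cmod c <= Im c.
Proof.
  pose proof (Rmax_Cmod c); pose proof (Rmax_r (Rabs (fst c)) (Rabs (snd c))).
  pose proof (Rabs_maj2 (snd c)); unfold Im; lra.
Qed.

Lemma is_series_norm_le {K : AbsRing} {V : NormedModule K}
  (a : nat -> V) (b : nat -> R) la lb :
  (forall n, norm (a n) <= b n) -> is_series a la -> is_series b lb -> norm la <= lb.
Proof.
  intros Hab Ha Hb.
  apply (is_lim_seq_le (fun n => norm (sum_n a n)) (sum_n b) (norm la) lb).
  - intros n; eapply Rle_trans; [apply norm_sum_n_m | apply sum_n_m_le, Hab].
  - eapply filterlim_comp; [exact Ha | apply filterlim_norm].
  - exact Hb.
Qed.

Lemma is_series_shift {K : AbsRing} {V : NormedModule K} (a : nat -> V) n l :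
  is_series (fun k => a (S n + k)%nat) l -> is_series a (plus l (sum_n a n)).
Proof.
  intros H; apply (is_series_decr_n a (S n)); [lia|]; change (Nat.pred (S n)) with n.
  now rewrite <- plus_assoc, (plus_opp_r (G := V)), plus_zero_r.
Qed.

Definition bipoly := list (Q * (nat * nat)).

Definition monomial_eval (m : Q * (nat * nat)) (x y : R) : R :=
  Q2R (fst m) * x ^ fst (snd m) * y ^ snd (snd m).

Definition bipoly_eval (p : bipoly) (x y : R) : R :=
  fold_right (fun m s => monomial_eval m x y + s) 0 p.

Lemma bipoly_eval_cons m p x y :
  bipoly_eval (m :: p) x y = monomial_eval m x y + bipoly_eval p x y.
Proof. reflexivity. Qed.

Lemma bipoly_eval_app p p' x y :
  bipoly_eval (p ++ p') x y = bipoly_eval p x y + bipoly_eval p' x y.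
Proof. induction p as [|m p IH]; simpl; [ring | rewrite IH; ring]. Qed.

Definition bipoly_opp (p : bipoly) : bipoly := map (fun m => (- fst m, snd m)%Q) p.

Lemma bipoly_eval_opp p x y : bipoly_eval (bipoly_opp p) x y = - bipoly_eval p x y.
Proof.
  induction p as [|m p IH]; simpl; [ring|].
  rewrite IH; unfold monomial_eval; simpl; rewrite Q2R_opp; ring.
Qed.

Definition bipoly_swap (p : bipoly) : bipoly :=
  map (fun m => (fst m, (snd (snd m), fst (snd m)))) p.

Lemma bipoly_eval_swap p x y : bipoly_eval (bipoly_swap p) y x = bipoly_eval p x y.
Proof.
  induction p as [|m p IH]; simpl; [ring|].
  rewrite IH; unfold monomial_eval; simpl; ring.
Qed.

Definition upoly := list (Q * nat).

Definition upoly_eval (l : upoly) (y : R) : R :=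
  fold_right (fun a s => Q2R (fst a) * y ^ snd a + s) 0 l.

Definition upoly_mulX (l : upoly) : upoly := map (fun a => (fst a, S (snd a))) l.

Lemma upoly_eval_mulX l y : upoly_eval (upoly_mulX l) y = y * upoly_eval l y.
Proof. induction l as [|a l IH]; simpl; [ring | rewrite IH; ring]. Qed.

Lemma Q2R_Qpower_nat (x : Q) (n : nat) : Q2R (Qpower x (Z.of_nat n)) = Q2R x ^ n.
Proof. rewrite Q2RpowerRZ by (right; lia). now rewrite <- pow_powerRZ. Qed.

Fixpoint pow_divdiff (T : Q) (j : nat) : upoly :=
  match j with
  | O => []
  | S j => (Qpower T (Z.of_nat j), O) :: upoly_mulX (pow_divdiff T j)
  end.

Lemma pow_sub_pow_divdiff T j y :
  y ^ j - Q2R T ^ j = (y - Q2R T) * upoly_eval (pow_divdiff T j) y.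
Proof.
  induction j as [|j IH]; simpl; [ring|].
  rewrite upoly_eval_mulX, Q2R_Qpower_nat.
  replace (y * y ^ j - Q2R T * Q2R T ^ j)
    with (y * (y ^ j - Q2R T ^ j) + Q2R T ^ j * (y - Q2R T)) by ring.
  rewrite IH; ring.
Qed.

Definition monomial_mul_upoly (m : Q * (nat * nat)) (l : upoly) : bipoly :=
  map (fun a => (fst m * fst a, (fst (snd m), snd a))%Q) l.

Lemma bipoly_eval_monomial_mul_upoly m l x y :
  bipoly_eval (monomial_mul_upoly m l) x y = Q2R (fst m) * x ^ fst (snd m) * upoly_eval l y.
Proof.
  induction l as [|a l IH]; simpl; [ring|].
  rewrite IH; unfold monomial_eval; simpl; rewrite Q2R_mult; ring.
Qed.

Definition bipoly_divdiff (p : bipoly) (T : Q) : bipoly :=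
  flat_map (fun m => monomial_mul_upoly m (pow_divdiff T (snd (snd m)))) p.

Lemma bipoly_eval_divdiff p T x y :
  bipoly_eval p x y - bipoly_eval p x (Q2R T) =
  (y - Q2R T) * bipoly_eval (bipoly_divdiff p T) x y.
Proof.
  induction p as [|[c [i j]] p IH]; [simpl; ring|].
  unfold bipoly_divdiff; simpl flat_map; fold (bipoly_divdiff p T).
  rewrite bipoly_eval_app, bipoly_eval_monomial_mul_upoly, !bipoly_eval_cons.
  transitivity (Q2R c * x ^ i * (y ^ j - Q2R T ^ j)
                + (bipoly_eval p x y - bipoly_eval p x (Q2R T)));
    [unfold monomial_eval; simpl; ring|].
  rewrite pow_sub_pow_divdiff, IH; simpl; ring.
Qed.

Definition in_interval (I : Q * Q) (x : R) : Prop := Q2R (fst I) <= x <= Q2R (snd I).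

Definition monomial_evalQ (m : Q * (nat * nat)) (a b : Q) : Q :=
  (fst m * Qpower a (Z.of_nat (fst (snd m))) * Qpower b (Z.of_nat (snd (snd m))))%Q.

Lemma Q2R_monomial_evalQ m a b :
  Q2R (monomial_evalQ m a b) = monomial_eval m (Q2R a) (Q2R b).
Proof. unfold monomial_evalQ, monomial_eval; now rewrite !Q2R_mult, !Q2R_Qpower_nat. Qed.

Lemma monomial_le_compat x x' y y' i j :
  0 <= x <= x' -> 0 <= y <= y' -> x ^ i * y ^ j <= x' ^ i * y' ^ j.
Proof.
  intros Hx Hy.
  apply Rmult_le_compat; try apply pow_le; try apply pow_incr; lra.
Qed.

Definition corner_monomial (m : Q * (nat * nat)) (I J : Q * Q) : Q :=
  if Qle_bool 0 (fst m) then monomial_evalQ m (fst I) (fst J)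
  else monomial_evalQ m (snd I) (snd J).

Lemma corner_monomial_le m I J x y :
  0 <= Q2R (fst I) -> 0 <= Q2R (fst J) -> in_interval I x -> in_interval J y ->
  Q2R (corner_monomial m I J) <= monomial_eval m x y.
Proof.
  intros HI HJ Hx Hy; unfold in_interval, corner_monomial in *.
  destruct (Qle_bool 0 (fst m)) eqn:Hc;
    rewrite Q2R_monomial_evalQ; unfold monomial_eval; rewrite !Rmult_assoc.
  - apply Qle_true in Hc; rewrite Q2R_0 in Hc.
    apply Rmult_le_compat_l; [lra|]. apply monomial_le_compat; lra.
  - assert (Hc' : Q2R (fst m) <= 0).
    { rewrite <- Q2R_0; apply Qle_Rle, Qlt_le_weak, Qnot_le_lt.
      now rewrite <- Qle_bool_iff, Hc. }
    apply Rmult_le_compat_neg_l; [lra|]. apply monomial_le_compat; lra.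
Qed.

Definition midpoint (I : Q * Q) : Q := Qred ((fst I + snd I) / 2).

Lemma Q2R_midpoint I : Q2R (midpoint I) = (Q2R (fst I) + Q2R (snd I)) / 2.
Proof.
  unfold midpoint; rewrite (Qeq_eqR _ _ (Qred_correct _)), Q2R_div by discriminate.
  rewrite Q2R_plus; unfold Q2R at 3; simpl; field.
Qed.

Lemma in_interval_bisect I x :
  in_interval I x ->
  (in_interval (fst I, midpoint I) x \/ in_interval (midpoint I, snd I) x)
  /\ Q2R (fst I) <= Q2R (midpoint I).
Proof.
  unfold in_interval; simpl; rewrite Q2R_midpoint; intros Hx.
  split; [destruct (Rle_lt_dec x ((Q2R (fst I) + Q2R (snd I)) / 2)) |]; lra.
Qed.

Section BranchAndBound.

Variable scale : positive.

(* Rounding each term down to a multiple of [1 / scale] keeps the numbers small. *)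
Definition corner_lower (p : bipoly) (I J : Q * Q) : Q :=
  fold_right (fun m s =>
    (Qfloor (inject_Z (Zpos scale) * corner_monomial m I J) + s)%Z) 0%Z p # scale.

Lemma floor_scaled_le (v : Q) :
  IZR (Qfloor (inject_Z (Zpos scale) * v)) / IZR (Zpos scale) <= Q2R v.
Proof.
  assert (Hinj : forall z, Q2R (inject_Z z) = IZR z) by (intros; unfold Q2R; simpl; field).
  pose proof (Qle_Rle _ _ (Qfloor_le (inject_Z (Zpos scale) * v))) as Hfl.
  rewrite Q2R_mult, !Hinj in Hfl.
  assert (0 < IZR (Zpos scale)) by now apply IZR_lt.
  apply Rmult_le_reg_r with (IZR (Zpos scale)); [lra|].
  unfold Rdiv; rewrite Rmult_assoc, Rinv_l by lra; lra.
Qed.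

Lemma corner_lower_le p I J x y :
  0 <= Q2R (fst I) -> 0 <= Q2R (fst J) -> in_interval I x -> in_interval J y ->
  Q2R (corner_lower p I J) <= bipoly_eval p x y.
Proof.
  intros HI HJ Hx Hy; unfold corner_lower, Q2R; simpl.
  induction p as [|m p IH]; simpl; [unfold Rdiv; rewrite Rmult_0_l; lra|].
  rewrite plus_IZR, Rmult_plus_distr_r.
  apply Rplus_le_compat; [|exact IH].
  eapply Rle_trans; [apply floor_scaled_le | now apply corner_monomial_le].
Qed.

Fixpoint bisect_ge (n : nat) (p : bipoly) (c : Q) (I J : Q * Q) : bool :=
  if Qle_bool c (corner_lower p I J) then true else
  match n with
  | O => false
  | S n =>
    let recurse K := if Qeq_bool (fst J) (snd J) then bisect_ge n p c K J
                     else bisect_ge n (bipoly_swap p) c J K in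
    recurse (fst I, midpoint I) && recurse (midpoint I, snd I)
  end.

Lemma bisect_ge_correct n p c I J x y :
  bisect_ge n p c I J = true ->
  0 <= Q2R (fst I) -> 0 <= Q2R (fst J) -> in_interval I x -> in_interval J y ->
  Q2R c <= bipoly_eval p x y.
Proof.
  revert p I J x y.
  induction n as [|n IH]; intros p I J x y Hb HI HJ Hx Hy; simpl in Hb;
    destruct (Qle_bool c (corner_lower p I J)) eqn:Hc.
  1, 3: apply Qle_true in Hc; eapply Rle_trans; [exact Hc | now apply corner_lower_le].
  - discriminate.
  - assert (Hrec : forall K, 0 <= Q2R (fst K) -> in_interval K x ->
      (if Qeq_bool (fst J) (snd J) then bisect_ge n p c K J
       else bisect_ge n (bipoly_swap p) c J K) = true -> Q2R c <= bipoly_eval p x y).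
    { intros K HK HxK HbK; destruct (Qeq_bool (fst J) (snd J)).
      - exact (IH _ _ _ _ _ HbK HK HJ HxK Hy).
      - rewrite <- bipoly_eval_swap; exact (IH _ _ _ _ _ HbK HJ HK Hy HxK). }
    apply andb_prop in Hb as [Hlo Hhi].
    destruct (in_interval_bisect I x Hx) as [[Hxl | Hxr] Hmid].
    + exact (Hrec (fst I, midpoint I) HI Hxl Hlo).
    + refine (Hrec (midpoint I, snd I) _ Hxr Hhi); simpl; lra.
Qed.

End BranchAndBound.

Lemma w_sqr : w ^ 2 = 9 / 2.
Proof.
  assert (0 < sqrt 2) by (apply sqrt_lt_R0; lra).
  unfold w; field_simplify; [now rewrite pow2_sqrt by lra | lra].
Qed.

Lemma w_bounds : 53 / 25 < w <= 17 / 8.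
Proof.
  assert (0 < w) by (unfold w; apply Rdiv_lt_0_compat; [lra | apply sqrt_lt_R0; lra]).
  pose proof w_sqr; split; nra.
Qed.

Definition im_theta5_poly : bipoly :=
  [(1#1, (1, 0)); (-2#1, (3, 1)); (3#1, (6, 2)); (-9#2, (6, 0)); (18#1, (10, 1));
   (-4#1, (10, 3)); (5#1, (15, 4)); (-45#1, (15, 2)); (81#4, (15, 0))]%nat.

Lemma Im_theta5 q t : Im (theta5 q t) = w * bipoly_eval im_theta5_poly q t.
Proof.
  transitivity (w * (q - 2 * t * q ^ 3 + q ^ 6 * (3 * t ^ 2 - w ^ 2)
    + q ^ 10 * (4 * t * w ^ 2 - 4 * t ^ 3)
    + q ^ 15 * (5 * t ^ 4 - 10 * t ^ 2 * w ^ 2 + (w ^ 2) ^ 2))).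
  - unfold theta5, theta_term, xpt; simpl; ring.
  - rewrite w_sqr; unfold bipoly_eval, monomial_eval, Q2R; simpl; field.
Qed.

Lemma im_theta5_poly_ge q t :
  3 / 10 <= q <= 6 / 10 -> 0 <= t <= 17 / 8 -> 123 / 2000 <= bipoly_eval im_theta5_poly q t.
Proof.
  intros Hq Ht.
  assert (Hedge : Q2R (123#2000) <= bipoly_eval im_theta5_poly q (Q2R (17#8))).
  { apply (bisect_ge_correct (2 ^ 40) 16 _ _ (3#10, 6#10) (17#8, 17#8));
      [vm_compute; reflexivity | unfold in_interval, Q2R; simpl; lra ..]. }
  assert (Hslope :
    Q2R 0 <= bipoly_eval (bipoly_opp (bipoly_divdiff im_theta5_poly (17#8))) q t).
  { apply (bisect_ge_correct (2 ^ 40) 16 _ _ (3#10, 6#10) (0%Q, 17#8));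
      [vm_compute; reflexivity | unfold in_interval, Q2R; simpl; lra ..]. }
  rewrite bipoly_eval_opp in Hslope.
  pose proof (bipoly_eval_divdiff im_theta5_poly (17#8) q t) as Hdd.
  unfold Q2R in *; simpl in *; nra.
Qed.

Lemma Im_theta5_gt q t : 3 / 10 <= q <= 6 / 10 -> 0 <= t <= w -> Im (theta5 q t) > 13 / 100.
Proof.
  intros Hq Ht; rewrite Im_theta5.
  pose proof w_bounds.
  pose proof (im_theta5_poly_ge q t Hq ltac:(lra)).
  nra.
Qed.

Lemma Cmod_xpt_le t : 0 <= t <= w -> Cmod (xpt t) <= 3.
Proof.
  intros Ht; pose proof w_sqr; pose proof w_bounds.
  unfold Cmod, xpt; simpl.
  rewrite <- (sqrt_pow2 3) by lra; apply sqrt_le_1_alt; nra.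
Qed.

(* The bound is 0.6^(21+7k) 3^(6+k) = (0.6^21 3^6) (0.6^7 3)^k, where
   0.6^21 3^6 < 0.016 and 0.6^7 3 < 0.1. *)
Lemma theta_term_tail_le q t k : 0 <= q <= 6 / 10 -> 0 <= t <= w ->
  Cmod (theta_term q (xpt t) (6 + k)) <= 16 / 1000 * (1 / 10) ^ k.
Proof.
  intros Hq Ht; unfold theta_term.
  rewrite Cmod_mult, Cmod_R, Cmod_pow, Rabs_pos_eq by (apply pow_le; lra).
  assert (Hexp : (21 + 7 * k <= (6 + k) * (6 + k + 1) / 2)%nat)
    by (apply Nat.div_le_lower_bound; [lia | nia]).
  assert (Hqpow : q ^ ((6 + k) * (6 + k + 1) / 2) <= (6 / 10) ^ (21 + 7 * k)).
  { eapply Rle_trans; [apply pow_le_pow_of_le_1; [lra | exact Hexp] | apply pow_incr; lra]. }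
  assert (Hxpow : Cmod (xpt t) ^ (6 + k) <= 3 ^ (6 + k))
    by (apply pow_incr; split; [apply Cmod_ge_0 | now apply Cmod_xpt_le]).
  apply Rle_trans with ((6 / 10) ^ (21 + 7 * k) * 3 ^ (6 + k)).
  { apply Rmult_le_compat; try apply pow_le; try apply Cmod_ge_0; lra. }
  replace ((6 / 10) ^ (21 + 7 * k) * 3 ^ (6 + k))
    with ((6 / 10) ^ 21 * 3 ^ 6 * ((6 / 10) ^ 7 * 3) ^ k)
    by (rewrite !pow_add, pow_mult, Rpow_mult_distr; ring).
  apply Rmult_le_compat; try apply pow_le; try apply pow_incr; lra.
Qed.

Lemma theta_tail_series q t : 3 / 10 <= q <= 6 / 10 -> 0 <= t <= w ->
  exists l, is_series (fun k => theta_term q (xpt t) (6 + k)) l /\ Cmod l <= 18 / 1000.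
Proof.
  intros Hq Ht.
  assert (Hb : is_series (fun k => 16 / 1000 * (1 / 10) ^ k) (16 / 1000 * / (1 - 1 / 10))).
  { apply (is_series_scal_l (V := R_NormedModule)), is_series_geom.
    rewrite Rabs_pos_eq; lra. }
  assert (Hab : forall k, norm (theta_term q (xpt t) (6 + k)) <= 16 / 1000 * (1 / 10) ^ k)
    by (intros k; apply theta_term_tail_le; lra).
  destruct (ex_series_le _ _ Hab (ex_intro _ _ Hb)) as [l Hl].
  exists l; split; [exact Hl|].
  eapply Rle_trans; [exact (is_series_norm_le _ _ _ _ Hab Hl Hb) | lra].
Qed.

Lemma sum_n_theta_term_5 q t : sum_n (theta_term q (xpt t)) 5 = theta5 q t.
Proof.
  rewrite !sum_Sn, sum_O; unfold theta5.
  apply injective_projections; simpl; ring.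
Qed.

Lemma is_series_theta_star q t l :
  is_series (fun k => theta_term q (xpt t) (6 + k)) l -> is_series (theta_star_term q t) l.
Proof.
  intros H.
  assert (Hsum : sum_n (G := C_NormedModule) (theta_star_term q t) 5 = zero)
    by (rewrite !sum_Sn, sum_O; apply injective_projections; simpl; ring).
  apply (is_series_shift (theta_star_term q t) 5) in H.
  now rewrite Hsum, plus_zero_r in H.
Qed.

Theorem lemma7 :
  forall q t : R, 3/10 <= q <= 6/10 -> 0 <= t <= w ->
    (exists l : C, is_series (theta_star_term q t) l /\ Cmod l <= 18/1000) /\
    Im (theta5 q t) > 13/100 /\
    (exists l : C, is_series (theta_term q (xpt t)) l /\ l <> RtoC 0).
Proof.
  intros q t Hq Ht.
  destruct (theta_tail_series q t Hq Ht) as [l [Hl Hlmod]].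
  pose proof (Im_theta5_gt q t Hq Ht) as Him.
  split; [|split; [exact Him|]].
  - exists l; split; [now apply is_series_theta_star | exact Hlmod].
  - exists (plus l (theta5 q t)); split.
    + rewrite <- sum_n_theta_term_5; exact (is_series_shift _ 5 _ Hl).
    + intros H0.
      assert (Him0 : Im l + Im (theta5 q t) = 0)
        by (change (Im (plus l (theta5 q t)) = 0); now rewrite H0).
      pose proof (Im_ge_opp_Cmod l); lra.
Qed.
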